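(* Let $X\subseteq\mathbb{C}^n$ be a complex analytic variety with coordinates $z_1,\dots,z_n$, $x\in X$, $M$ an $\mathcal{O}_{X,x}$-submodule of $\mathcal{O}_{X,x}^p$ with matrix of generators $[M]=[g_1\cdots g_r]$, and $k\in\mathbb{N}$. Let $[M_D]=\begin{bmatrix}[M] & 0\\ [M]' & [\tilde M]\end{bmatrix}$, where $[\tilde M]$ is the $p\times nr$ matrix with columns $(z_i-z_i')g_j'$, $i=1,\dots,n$, $j=1,\dots,r$. Let $\mathcal{I}_{2k}(M_D)$ be the ideal of $\mathcal{O}_{X\times X,(x,x)}$ generated by $\{\det(M_{IJ})\det(\tilde M_{KL}): I,J,K,L\text{ are }k\text{-indexes}\}$. Then $\mathcal{I}_{2k}(M_D)\subseteq I_\Delta^{k-1}\,I_2((I_k(M))_D)$.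
   Context: $\pi_1,\pi_2:X\times X\to X$ are projections; for an object $A$ on $X$, $A$ also denotes $A\circ\pi_1$ and $A'$ denotes $A\circ\pi_2$. The matrix $[M_D]$ above is a matrix of generators of $M_D$, the submodule of $\mathcal{O}_{X\times X,(x,x)}^{2p}$ generated by $h_D=(h\circ\pi_1,h\circ\pi_2)$, $h\in M$. For a matrix $A$ and $k$-indexes $I,J$, $A_{IJ}$ is the submatrix with rows $I$ and columns $J$. $I_\Delta$ is the ideal generated by $z_i-z_i'$, $i=1,\dots,n$. $I_k(M)$ is the ideal of $k\times k$ minors of $[M]$, $(I_k(M))_D\subseteq\mathcal{O}^2_{X\times X,(x,x)}$ is generated by $(f\circ\pi_1,f\circ\pi_2)$, $f\in I_k(M)$, and $I_2(\cdot)$ denotes the ideal of $2\times 2$ minors. *)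

From HB Require Import structures.
From mathcomp Require Import all_boot all_order all_algebra.
Set Implicit Arguments. Unset Strict Implicit. Unset Printing Implicit Defensive.
Import Order.TTheory GRing.Theory Num.Theory.
Local Open Scope ring_scope.

Definition ideal_gen (R : comNzRingType) (S : R -> Prop) : R -> Prop :=
  fun x => exists (m : nat) (c s : 'I_m -> R),
    (forall i, S (s i)) /\ x = \sum_(i < m) c i * s i.

Definition ideal_mul (R : comNzRingType) (I J : R -> Prop) : R -> Prop :=
  ideal_gen (fun x => exists a b, I a /\ J b /\ x = a * b).

Fixpoint ideal_exp (R : comNzRingType) (I : R -> Prop) (n : nat) : R -> Prop :=
  match n with
  | 0%N => fun _ => True
  | n'.+1 => ideal_mul (ideal_exp I n') I
  end.

Definition kindex (k m : nat) (f : 'I_k -> 'I_m) : Prop :=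
  forall a b : 'I_k, (a < b)%N -> (f a < f b)%N.

Definition minor_ideal (R : comNzRingType) (p r k : nat) (G : 'M[R]_(p, r)) :
  R -> Prop :=
  ideal_gen (fun x => exists (I : 'I_k -> 'I_p) (J : 'I_k -> 'I_r),
    kindex I /\ kindex J /\ x = \det (mxsub I J G)).

Definition module_gen2 (R : comNzRingType) (S : R * R -> Prop) : R * R -> Prop :=
  fun v => exists (m : nat) (c : 'I_m -> R) (s : 'I_m -> R * R),
    (forall i, S (s i)) /\
    v = (\sum_(i < m) c i * (s i).1, \sum_(i < m) c i * (s i).2).

Definition I2_mod (R : comNzRingType) (N : R * R -> Prop) : R -> Prop :=
  ideal_gen (fun x => exists u v, N u /\ N v /\ x = u.1 * v.2 - u.2 * v.1).

(* (J)_D for an ideal J of A: the submodule of B^2 generated by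
   (f o pi1, f o pi2), f in J, where p1, p2 are the pullbacks along pi1, pi2. *)
Definition ideal_D (A B : comNzRingType) (p1 p2 : A -> B) (J : A -> Prop) :
  B * B -> Prop :=
  module_gen2 (fun v => exists f, J f /\ v = (p1 f, p2 f)).

Definition I_Delta (A B : comNzRingType) (n : nat) (p1 p2 : A -> B)
  (z : 'I_n -> A) : B -> Prop :=
  ideal_gen (fun x => exists i, x = p1 (z i) - p2 (z i)).

(* [~M]: the p x (n r) matrix with columns (z_i - z_i') g_j', the column
   (i, j) sitting at index mxvec_index i j. *)
Definition Mtilde (A B : comNzRingType) (n p r : nat) (p1 p2 : A -> B)
  (z : 'I_n -> A) (G : 'M[A]_(p, r)) : 'M[B]_(p, n * r) :=
  \matrix_(a < p) mxvec (\matrix_(i < n, j < r) ((p1 (z i) - p2 (z i)) * p2 (G a j))).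

Definition I2k_MD (A B : comNzRingType) (n p r k : nat) (p1 p2 : A -> B)
  (z : 'I_n -> A) (G : 'M[A]_(p, r)) : B -> Prop :=
  ideal_gen (fun x => exists (I : 'I_k -> 'I_p) (J : 'I_k -> 'I_r)
                              (K : 'I_k -> 'I_p) (L : 'I_k -> 'I_(n * r)),
    kindex I /\ kindex J /\ kindex K /\ kindex L /\
    x = \det (mxsub I J (map_mx p1 G)) * \det (mxsub K L (Mtilde p1 p2 z G))).

(* Each column of [~M] is a column g_j' of [M]' scaled by z_i - z_i', so a k x k minor
   of [~M] is the minor det(M_{K,j(L)})' (zero or, up to sign, a generator of I_k(M)')
   times a product of k differences z_i - z_i'.  One of these differences is absorbed
   into the 2 x 2 minor
     (z - z') f g' = det[(z f, (z f)'), (g, g')] - z' det[(f, f'), (g, g')]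
   of (I_k(M))_D, which contains det(M_{IJ}) det(M_{K,j(L)})'; the other k - 1 lie in
   I_Delta. *)
From HB Require Import structures.
From mathcomp Require Import all_boot all_order all_algebra all_fingroup.
From mathcomp Require Import ring.
Set Implicit Arguments. Unset Strict Implicit. Unset Printing Implicit Defensive.
Import GRing.Theory.
Local Open Scope ring_scope.

Section IdealGen.
Variable R : comNzRingType.
Implicit Types S : R -> Prop.

Lemma ideal_gen_in S x : S x -> ideal_gen S x.
Proof. by move=> Sx; exists 1%N, (fun _ => 1), (fun _ => x); rewrite big_ord1 mul1r. Qed.

Lemma ideal_gen0 S : ideal_gen S 0.
Proof. by exists 0%N, (fun _ => 0), (fun _ => 0); split => [[]//|]; rewrite big_ord0. Qed.

Lemma ideal_genD S x y : ideal_gen S x -> ideal_gen S y -> ideal_gen S (x + y).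
Proof.
move=> [m [c [s [Ss ->]]]] [m' [c' [s' [Ss' ->]]]].
pose glue T (u : 'I_m -> T) (u' : 'I_m' -> T) (i : 'I_(m + m')) :=
  match split i with inl a => u a | inr b => u' b end.
exists (m + m')%N, (glue _ c c'), (glue _ s s').
split => [i|]; first by rewrite /glue; case: (split i).
rewrite big_split_ord; congr (_ + _); apply: eq_bigr => i _.
  by rewrite /glue -[lshift _ _]/(unsplit (inl i)) unsplitK.
by rewrite /glue -[rshift _ _]/(unsplit (inr i)) unsplitK.
Qed.

Lemma ideal_genMl S a x : ideal_gen S x -> ideal_gen S (a * x).
Proof.
move=> [m [c [s [Ss ->]]]]; exists m, (fun i => a * c i), s; split => //.
by rewrite mulr_sumr; apply: eq_bigr => i _; rewrite mulrA.
Qed.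

Lemma ideal_genB S x y : ideal_gen S x -> ideal_gen S y -> ideal_gen S (x - y).
Proof. by move=> Sx Sy; rewrite -mulN1r; apply/ideal_genD/ideal_genMl. Qed.

Lemma ideal_exp_prod S m (F : 'I_m -> R) :
  (forall i, S (F i)) -> ideal_exp S m (\prod_(i < m) F i).
Proof.
elim: m F => [|m IHm] F SF //=; rewrite big_ord_recr /=.
apply: ideal_gen_in; exists (\prod_(i < m) F (widen_ord (leqnSn m) i)), (F ord_max).
by split; [apply: IHm | split].
Qed.

End IdealGen.

Lemma kindex_factor k m (f : 'I_k -> 'I_m) :
  injective f -> exists2 g : 'I_k -> 'I_m, kindex g & exists s : 'S_k, f =1 g \o s.
Proof.
move=> injf; pose S := f @: [set: 'I_k].
have cardS : #|S| = k by rewrite card_imset // cardsT card_ord.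
pose g (t : 'I_k) := enum_val (cast_ord (esym cardS) t).
have fS t : f t \in S by apply: imset_f; rewrite inE.
pose s t := cast_ord cardS (enum_rank_in (fS t) (f t)).
have fgs t : f t = g (s t) by rewrite /g /s cast_ordK enum_rankK_in.
have injs : injective s by move=> a b sab; apply: injf; rewrite !fgs sab.
exists g; last by exists (perm.perm injs) => t; rewrite /= perm.permE fgs.
move=> a b ltab.
have sortedS : sorted ltn (map val (enum S)).
  rewrite -[enum _](eq_filter (mem_enum _)) -(eq_filter (mem_map val_inj _)).
  by rewrite -filter_map (sorted_filter ltn_trans) // unlock val_ord_enum iota_ltn_sorted.
have sizeS : size (map val (enum S)) = k by rewrite size_map -cardE.
move: (sorted_ltn_nth ltn_trans 0%N sortedS a b); rewrite !inE sizeS !ltn_ord.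
move=> /(_ isT isT ltab).
by rewrite /g !(enum_val_nth (f a)) !(nth_map (f a)) // -cardE cardS.
Qed.

Lemma minor_ideal_det_mxsub (R : comNzRingType) p r k (G : 'M[R]_(p, r))
    (K : 'I_k -> 'I_p) (f : 'I_k -> 'I_r) :
  kindex K -> minor_ideal k G (\det (mxsub K f G)).
Proof.
move=> incK; have [/injectiveP injf | /injectivePn [a [b neqab fab]]] := boolP (injectiveb f).
  have [g incg [s fgs]] := kindex_factor injf.
  have -> : mxsub K f G = col_perm s (mxsub K g G).
    by apply/matrixP => i t; rewrite !mxE fgs.
  rewrite col_permE det_mulmx det_perm mulrC.
  by apply/ideal_genMl/ideal_gen_in; exists K, g.
rewrite -det_tr (determinant_alternate neqab); first exact: ideal_gen0.
by move=> i; rewrite !mxE fab.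
Qed.

Lemma det_mxsub_Mtilde (A B : comNzRingType) (p1 p2 : {rmorphism A -> B})
    n p r k (z : 'I_n -> A) (G : 'M[A]_(p, r))
    (K : 'I_k -> 'I_p) (L : 'I_k -> 'I_(n * r)) :
  exists (i : 'I_k -> 'I_n) (j : 'I_k -> 'I_r),
    \det (mxsub K L (Mtilde p1 p2 z G)) =
    p2 (\det (mxsub K j G)) * \prod_(t < k) (p1 (z (i t)) - p2 (z (i t))).
Proof.
pose ij (l : 'I_(n * r)) := enum_val (cast_ord (esym (mxvec_cast n r)) l).
have mxvec_ij (M : 'M[B]_(n, r)) l : mxvec M 0 l = M (ij l).1 (ij l).2.
  by case/mxvec_indexP: l => i j; rewrite /ij cast_ordK enum_rankK mxvecE.
exists (fun t => (ij (L t)).1), (fun t => (ij (L t)).2).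
have -> : mxsub K L (Mtilde p1 p2 z G) = map_mx p2 (mxsub K (fun t => (ij (L t)).2) G)
    *m diag_mx (\row_t (p1 (z (ij (L t)).1) - p2 (z (ij (L t)).1))).
  by apply/matrixP => a t; rewrite mul_mx_diag !mxE mxvec_ij mxE mulrC.
rewrite det_mulmx det_diag det_map_mx; congr (_ * _).
by apply: eq_bigr => t _; rewrite mxE.
Qed.

Section ImageOfI2.
Variables (A B : comNzRingType) (p1 p2 : {rmorphism A -> B}) (J : A -> Prop).
Hypothesis J_mull : forall a f, J f -> J (a * f).

Lemma ideal_D_pair f : J f -> ideal_D p1 p2 J (p1 f, p2 f).
Proof.
move=> Jf; exists 1%N, (fun _ => 1), (fun _ => (p1 f, p2 f)).
by split => [_|]; [exists f | rewrite !big_ord1 !mul1r].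
Qed.

Lemma I2_mod_ideal_D_minor f g : J f -> J g ->
  I2_mod (ideal_D p1 p2 J) (p1 f * p2 g - p2 f * p1 g).
Proof.
move=> Jf Jg; apply: ideal_gen_in; exists (p1 f, p2 f), (p1 g, p2 g).
by split; [exact: ideal_D_pair | split; first exact: ideal_D_pair].
Qed.

Lemma I2_mod_ideal_D_diff a f g : J f -> J g ->
  I2_mod (ideal_D p1 p2 J) ((p1 a - p2 a) * p1 f * p2 g).
Proof.
move=> Jf Jg.
have -> : (p1 a - p2 a) * p1 f * p2 g =
    (p1 (a * f) * p2 g - p2 (a * f) * p1 g) - p2 a * (p1 f * p2 g - p2 f * p1 g).
  by rewrite !rmorphM /=; ring.
by apply: ideal_genB; [|apply: ideal_genMl]; apply: I2_mod_ideal_D_minor => //; apply: J_mull.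
Qed.

End ImageOfI2.

Theorem lemma3p4 (A B : comNzRingType) (p1 p2 : {rmorphism A -> B})
  (n p r k : nat) (z : 'I_n -> A) (G : 'M[A]_(p, r)) :
  (0 < k)%N ->
  forall x : B, I2k_MD k p1 p2 z G x ->
    ideal_mul (ideal_exp (I_Delta p1 p2 z) k.-1)
              (I2_mod (ideal_D p1 p2 (minor_ideal k G))) x.
Proof.
case: k => [//|k] _ x [m [c [s [gen_s ->]]]].
exists m, c, s; split => // l.
have [I [J [K [L [incI [incJ [incK [incL ->]]]]]]]] := gen_s l.
have [i [j ->]] := det_mxsub_Mtilde p1 p2 z G K L.
pose dz t := p1 (z (i t)) - p2 (z (i t)).
rewrite -map_mxsub det_map_mx big_ord_recl.
exists (\prod_(t < k) dz (lift ord0 t)),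
       (dz ord0 * p1 (\det (mxsub I J G)) * p2 (\det (mxsub K j G))).
split; last split; last by rewrite /dz; ring.
  by apply: ideal_exp_prod => t; apply: ideal_gen_in; exists (i (lift ord0 t)).
apply: I2_mod_ideal_D_diff; last exact: minor_ideal_det_mxsub.
  by move=> a f; apply: ideal_genMl.
by apply: ideal_gen_in; exists I, J.
Qed.
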